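(* Let $\alpha>0$ and let $\tilde\psi_\ell,\tilde\psi_g\in C^2\big((\alpha,\infty)\times(0,\infty)\big)$ be functions of $(v,\theta)$. Set $\tilde p_i=-\partial_v\tilde\psi_i$ and $\tilde\eta_i=-\partial_\theta\tilde\psi_i$ for $i\in\{\ell,g\}$. Let $\rho_\ell>0$ and $\theta_b>0$ be such that $v_\ell:=1/\rho_\ell=v_\ell^*(\theta_b)$ is the saturated liquid volume at temperature $\theta_b$, and let $v_g^*:=v_g^*(\theta_b)$ be the corresponding saturated gas volume; that is, $\alpha<v_\ell<v_g^*$ and \[ \tilde p_\ell(v_\ell,\theta_b)=\tilde p_g(v_g^*,\theta_b)=\frac{\tilde\psi_\ell(v_\ell,\theta_b)-\tilde\psi_g(v_g^*,\theta_b)}{v_g^*-v_\ell}. \] For $\theta>0$, $v>\alpha$ with $v\ne v_\ell$, and $Z\in\mathbf{R}$ define \begin{align*} f_1(\theta,v,Z)&=\tilde p_\ell(v_\ell,\theta)-Z(v-v_\ell)-\frac{1}{v-v_\ell}\big(\tilde\psi_\ell(v_\ell,\theta)-\tilde\psi_g(v,\theta)\big),\\ f_2(\theta,v,Z)&=\tilde p_g(v,\theta)+Z(v-v_\ell)-\frac{1}{v-v_\ell}\big(\tilde\psi_\ell(v_\ell,\theta)-\tilde\psi_g(v,\theta)\big). \end{align*} Assume \[ \partial_v\tilde\eta_\ell(v_\ell,\theta_b)>\frac{\tilde\eta_g(v_g^*,\theta_b)-\tilde\eta_\ell(v_\ell,\theta_b)}{v_g^*-v_\ell},\qquad \partial_v\tilde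 p_g(v_g^*,\theta_b)<0 . \] Then for all sufficiently small $Z$ there is a unique $(v,\theta)$ near $(v_g^*,\theta_b)$ such that $f_1(\theta,v,Z)=0$ and $f_2(\theta,v,Z)=0$. Moreover, the resulting map $Z\mapsto\theta$ is strictly increasing.
   Context: $\tilde\psi_\ell$ and $\tilde\psi_g$ are the mass specific Helmholtz energies of the liquid and gas phase written as functions of the mass specific volume $v=1/\rho$ and the temperature $\theta$; $\tilde p_i$ is the pressure and $\tilde\eta_i$ the mass specific entropy. The displayed condition defining $v_\ell^*(\theta_b)$, $v_g^*(\theta_b)$ expresses that these are the contact points of the bitangent line to the graphs of $\tilde\psi_\ell(\cdot,\theta_b)$ and $\tilde\psi_g(\cdot,\theta_b)$ (equal slopes $-\tilde p$ and the line through both points). The equations $f_1=f_2=0$ with $Z=j_\Gamma^2/2$ are the momentum balance $\tilde p_\ell-\tilde p_g=j_\Gamma^2(v-v_\ell)$ and the Gibbs–Thomson relation $\tilde\psi_g(v,\theta)-\tilde\psi_\ell(v_\ell,\theta)+(v-v_\ell)\frac{\tilde p_\ell+\tilde p_g}{2}=0$ at a flat liquid–gas interface with phase flux $j_\Gamma$, where $\theta$ is the interface temperature and $v=1/\rho_g$ the gas specific volume. *)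

From Stdlib Require Import Reals.
From Coquelicot Require Import Coquelicot.
Open Scope R_scope.

Definition dv (f : R -> R -> R) (v th : R) : R := Derive (fun x => f x th) v.
Definition dth (f : R -> R -> R) (v th : R) : R := Derive (fun t => f v t) th.

Definition cont2 (f : R -> R -> R) (v th : R) : Prop :=
  continuous (fun p : R * R => f (fst p) (snd p)) (v, th).

Definition C1_on (U : R -> R -> Prop) (f : R -> R -> R) : Prop :=
  forall v th, U v th ->
    ex_derive (fun x => f x th) v /\ ex_derive (fun t => f v t) th /\
    cont2 f v th /\ cont2 (dv f) v th /\ cont2 (dth f) v th.

Definition C2_on (U : R -> R -> Prop) (f : R -> R -> R) : Prop :=
  C1_on U f /\ C1_on U (dv f) /\ C1_on U (dth f).

Definition dom (alpha : R) (v th : R) : Prop := alpha < v /\ 0 < th.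

Definition pres (psi : R -> R -> R) (v th : R) : R := - dv psi v th.
Definition entr (psi : R -> R -> R) (v th : R) : R := - dth psi v th.

Definition f1 (psil psig : R -> R -> R) (vl th v Z : R) : R :=
  pres psil vl th - Z * (v - vl) - / (v - vl) * (psil vl th - psig v th).
Definition f2 (psil psig : R -> R -> R) (vl th v Z : R) : R :=
  pres psig v th + Z * (v - vl) - / (v - vl) * (psil vl th - psig v th).

(* Write F := (v - vl) f1 and G := f2 - f1, so that for v <> vl the system
   f1 = f2 = 0 reads G = F = 0 (G = 0 is the momentum balance).  The key identity
   is dF/dv = -G.  Near (vgs, thb) the stability condition dp_g/dv < 0 makes G
   strictly decreasing in v, so F(., th, Z) is convex and is minimal exactly at the
   unique zero of G.  The system therefore reduces to the scalar equation
   E(th, Z) = 0 for the envelope E(th, Z) := min_v F(v, th, Z).  A pointwise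
   minimum of functions whose th-slopes lie in [m, M] and whose Z-slopes lie in
   [-N, -n] has slopes in the same ranges: here dF/dth > 0 is the entropy
   condition rewritten with the Maxwell relation dp_l/dth = deta_l/dv, and
   dF/dZ = -(v - vl)^2.  Hence E(., Z) has exactly one zero Th(Z) near thb, and
   Th increases with Z because E decreases in Z; no implicit function theorem is
   needed. *)

From Stdlib Require Import Reals Lra ClassicalEpsilon.
From Coquelicot Require Import Coquelicot.
Open Scope R_scope.

Lemma Rmin_pos_bounds (a b : R) :
  0 < a -> 0 < b -> 0 < Rmin a b /\ Rmin a b <= a /\ Rmin a b <= b.
Proof. intros. split; [apply Rmin_glb_lt | split; [apply Rmin_l | apply Rmin_r]]; assumption. Qed.

Lemma ex_derive_continuity_pt (f : R -> R) (x : R) :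
  ex_derive f x -> continuity_pt f x.
Proof. intros H. apply continuity_pt_filterlim, (ex_derive_continuous f x H). Qed.

Lemma MVT_le (f df : R -> R) (a b : R) :
  a <= b -> (forall x, a <= x <= b -> is_derive f x (df x)) ->
  exists c, a <= c <= b /\ f b - f a = df c * (b - a).
Proof.
  intros Hab Hf.
  assert (Emin : Rmin a b = a) by (apply Rmin_left; lra).
  assert (Emax : Rmax a b = b) by (apply Rmax_right; lra).
  destruct (MVT_gen f a b df) as [c Hc]; rewrite ?Emin, ?Emax in *.
  - intros x Hx. apply Hf. lra.
  - intros x Hx. apply ex_derive_continuity_pt. exists (df x). apply Hf, Hx.
  - exists c. exact Hc.
Qed.

Lemma derive_le_slope (f df : R -> R) (a b K : R) :
  a <= b -> (forall x, a <= x <= b -> is_derive f x (df x)) ->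
  (forall x, a <= x <= b -> df x <= K) -> f b - f a <= K * (b - a).
Proof.
  intros Hab Hf HK. destruct (MVT_le f df a b Hab Hf) as [c [Hc ->]].
  apply Rmult_le_compat_r; [lra | apply HK, Hc].
Qed.

Lemma derive_ge_slope (f df : R -> R) (a b K : R) :
  a <= b -> (forall x, a <= x <= b -> is_derive f x (df x)) ->
  (forall x, a <= x <= b -> K <= df x) -> K * (b - a) <= f b - f a.
Proof.
  intros Hab Hf HK. destruct (MVT_le f df a b Hab Hf) as [c [Hc ->]].
  apply Rmult_le_compat_r; [lra | apply HK, Hc].
Qed.

Lemma min_at_critical_point (f df : R -> R) (a b x0 : R) :
  (forall x, a <= x <= b -> is_derive f x (df x)) ->
  (forall x y, a <= x -> x <= y -> y <= b -> df x <= df y) ->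
  a <= x0 <= b -> df x0 = 0 -> forall x, a <= x <= b -> f x0 <= f x.
Proof.
  intros Hf Hdf Hx0 E x Hx.
  destruct (Rle_dec x x0) as [Hle | Hgt].
  - assert (f x0 - f x <= 0 * (x0 - x)); [ | lra].
    apply (derive_le_slope f df); [lra | intros; apply Hf; lra | ].
    intros y Hy. rewrite <- E. apply Hdf; lra.
  - assert (0 * (x - x0) <= f x - f x0); [ | lra].
    apply (derive_ge_slope f df); [lra | intros; apply Hf; lra | ].
    intros y Hy. rewrite <- E. apply Hdf; lra.
Qed.

Lemma envelope_slope_bounds (F : R -> R -> R) (S I : R -> Prop) (w : R -> R) (lo hi : R) :
  (forall p, I p -> S (w p) /\ forall v, S v -> F (w p) p <= F v p) ->
  (forall v p1 p2, S v -> I p1 -> I p2 -> p1 <= p2 ->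
     lo * (p2 - p1) <= F v p2 - F v p1 <= hi * (p2 - p1)) ->
  forall p1 p2, I p1 -> I p2 -> p1 <= p2 ->
    lo * (p2 - p1) <= F (w p2) p2 - F (w p1) p1 <= hi * (p2 - p1).
Proof.
  intros Hmin Hslope p1 p2 H1 H2 H12.
  destruct (Hmin p1 H1) as [S1 min1], (Hmin p2 H2) as [S2 min2].
  pose proof (min1 (w p2) S2). pose proof (min2 (w p1) S1).
  pose proof (Hslope (w p1) p1 p2 S1 H1 H2 H12).
  pose proof (Hslope (w p2) p1 p2 S2 H1 H2 H12).
  lra.
Qed.

Lemma root_of_sign_change (g : R -> R) (a b : R) :
  a < b -> (forall x, a <= x <= b -> continuity_pt g x) -> g a < 0 -> 0 < g b ->
  exists x, a < x < b /\ g x = 0.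
Proof.
  intros Hab Hg Ha Hb.
  destruct (Ranalysis5.IVT_interv g a b Hg Hab Ha Hb) as [x [Hx E]].
  exists x. split; [ | exact E].
  assert (x <> a) by (intros ->; lra). assert (x <> b) by (intros ->; lra). lra.
Qed.

Lemma continuity_pt_of_lipschitz (f : R -> R) (a b K x : R) :
  (forall y, a < y < b -> Rabs (f y - f x) <= K * Rabs (y - x)) -> a < x < b ->
  continuity_pt f x.
Proof.
  intros Hf Hx eps Heps.
  assert (HK : 0 < Rabs K + 1) by (pose proof (Rabs_pos K); lra).
  destruct (Rmin_pos_bounds (x - a) (b - x)) as (dx_gt0 & dx_le_a & dx_le_b); [lra | lra | ].
  destruct (Rmin_pos_bounds (eps / (Rabs K + 1)) _ (Rdiv_lt_0_compat _ _ Heps HK) dx_gt0)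
    as (d_gt0 & d_le_eps & d_le_x).
  exists (Rmin (eps / (Rabs K + 1)) (Rmin (x - a) (b - x))). split; [exact d_gt0 | ].
  intros y [_ Hy]. simpl in Hy |- *. unfold R_dist in *.
  assert (Hyab : a < y < b) by (apply Rabs_lt_between' in Hy; lra).
  assert (Hsmall : (Rabs K + 1) * Rabs (y - x) < eps).
  { replace eps with ((Rabs K + 1) * (eps / (Rabs K + 1))) by (field; lra).
    apply Rmult_lt_compat_l; lra. }
  pose proof (Hf y Hyab). pose proof (Rle_abs K). pose proof (Rabs_pos (y - x)).
  nra.
Qed.

Lemma continuity_2d_pt_ball (f : R -> R -> R) (x y e : R) :
  continuity_2d_pt f x y -> 0 < e ->
  exists d, 0 < d /\ forall u w, x - d < u < x + d -> y - d < w < y + d ->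
    f x y - e < f u w < f x y + e.
Proof.
  intros Hf He. destruct (Hf (mkposreal e He)) as [d Hd].
  exists d. split; [apply cond_pos | intros u w Hu Hw].
  apply Rabs_lt_between', Hd; apply Rabs_lt_between'; lra.
Qed.

Lemma continuity_2d_pt_fix_fst (f : R -> R -> R) (a x y : R) :
  continuity_2d_pt f a y -> continuity_2d_pt (fun _ w => f a w) x y.
Proof.
  intros Hf eps. destruct (Hf eps) as [d Hd]. exists d. intros u w _ Hw.
  apply Hd; [rewrite Rminus_eq_0, Rabs_R0; apply cond_pos | exact Hw].
Qed.

Lemma continuity_2d_pt_of_fst (f : R -> R) (x y : R) :
  continuity_pt f x -> continuity_2d_pt (fun u _ => f u) x y.
Proof.
  intros Hf. apply (continuity_1d_2d_pt_comp f (fun u _ => u));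
    [exact Hf | apply continuity_2d_pt_id1].
Qed.

Lemma cont2_continuity_2d_pt (f : R -> R -> R) (v t : R) :
  cont2 f v t -> continuity_2d_pt f v t.
Proof. intros H. apply continuity_2d_pt_filterlim, H. Qed.

(** * Zeros of a minimum envelope *)

Section Envelope.

Variables (F G : R -> R -> R -> R) (v0 t0 s r zeta k m M n N : R).

Hypotheses (s_gt0 : 0 < s) (r_gt0 : 0 < r) (zeta_gt0 : 0 < zeta)
  (k_gt0 : 0 < k) (m_gt0 : 0 < m) (n_gt0 : 0 < n) (n_le_N : n <= N).

Hypothesis F_derive_v : forall v t Z,
  v0 - s <= v <= v0 + s -> t0 - r < t < t0 + r -> - zeta < Z < zeta ->
  is_derive (fun x => F x t Z) v (- G v t Z).
Hypothesis G_continuous_v : forall v t Z,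
  v0 - s <= v <= v0 + s -> t0 - r < t < t0 + r -> - zeta < Z < zeta ->
  continuity_pt (fun x => G x t Z) v.
Hypothesis G_slope_v : forall v1 v2 t Z,
  v0 - s <= v1 -> v1 <= v2 -> v2 <= v0 + s ->
  t0 - r < t < t0 + r -> - zeta < Z < zeta ->
  k * (v2 - v1) <= G v1 t Z - G v2 t Z.
Hypothesis G_ends : forall t Z,
  t0 - r < t < t0 + r -> - zeta < Z < zeta -> G (v0 + s) t Z < 0 < G (v0 - s) t Z.
Hypothesis G_continuous_base : continuity_2d_pt (fun t Z => G v0 t Z) t0 0.
Hypothesis F_slope_t : forall v t1 t2 Z,
  v0 - s <= v <= v0 + s -> t0 - r < t1 < t0 + r -> t0 - r < t2 < t0 + r -> t1 <= t2 ->
  - zeta < Z < zeta -> m * (t2 - t1) <= F v t2 Z - F v t1 Z <= M * (t2 - t1).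
Hypothesis F_slope_Z : forall v t Z1 Z2,
  v0 - s <= v <= v0 + s -> t0 - r < t < t0 + r ->
  - zeta < Z1 < zeta -> - zeta < Z2 < zeta -> Z1 <= Z2 ->
  - N * (Z2 - Z1) <= F v t Z2 - F v t Z1 <= - n * (Z2 - Z1).
Hypothesis F_base : F v0 t0 0 = 0.
Hypothesis G_base : G v0 t0 0 = 0.

Lemma G_root_unique t Z v1 v2 :
  t0 - r < t < t0 + r -> - zeta < Z < zeta ->
  v0 - s <= v1 <= v0 + s -> v0 - s <= v2 <= v0 + s ->
  G v1 t Z = 0 -> G v2 t Z = 0 -> v1 = v2.
Proof.
  intros Ht HZ H1 H2 E1 E2.
  destruct (Rle_dec v1 v2).
  - pose proof (G_slope_v v1 v2 t Z ltac:(lra) ltac:(lra) ltac:(lra) Ht HZ). nra.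
  - pose proof (G_slope_v v2 v1 t Z ltac:(lra) ltac:(lra) ltac:(lra) Ht HZ). nra.
Qed.

Lemma G_root_exists t Z :
  t0 - r < t < t0 + r -> - zeta < Z < zeta ->
  exists v, v0 - s < v < v0 + s /\ G v t Z = 0.
Proof.
  intros Ht HZ. destruct (G_ends t Z Ht HZ) as [Gp Gm].
  destruct (root_of_sign_change (fun x => - G x t Z) (v0 - s) (v0 + s))
    as [v [Hv E]]; try lra.
  - intros x Hx. apply (continuity_pt_opp (fun x => G x t Z)), G_continuous_v; lra.
  - exists v. split; [exact Hv | lra].
Qed.

Definition G_root (t Z : R) : R :=
  epsilon (inhabits 0) (fun v => v0 - s < v < v0 + s /\ G v t Z = 0).

Lemma G_root_spec t Z :
  t0 - r < t < t0 + r -> - zeta < Z < zeta ->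
  v0 - s < G_root t Z < v0 + s /\ G (G_root t Z) t Z = 0.
Proof. intros Ht HZ. unfold G_root. apply epsilon_spec, G_root_exists; assumption. Qed.

Lemma G_root_close t Z e :
  t0 - r < t < t0 + r -> - zeta < Z < zeta ->
  - (k * e) < G v0 t Z < k * e -> v0 - e < G_root t Z < v0 + e.
Proof.
  intros Ht HZ HG. destruct (G_root_spec t Z Ht HZ) as [Hw Gw].
  assert (e_gt0 : 0 < e) by nra.
  destruct (Rle_dec (G_root t Z) v0).
  - pose proof (G_slope_v (G_root t Z) v0 t Z ltac:(lra) ltac:(lra) ltac:(lra) Ht HZ).
    split; [ | lra]. apply (Rmult_lt_reg_l k); lra.
  - pose proof (G_slope_v v0 (G_root t Z) t Z ltac:(lra) ltac:(lra) ltac:(lra) Ht HZ).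
    split; [lra | ]. apply (Rmult_lt_reg_l k); lra.
Qed.

Definition envelope (t Z : R) : R := F (G_root t Z) t Z.

Lemma envelope_le t Z v :
  t0 - r < t < t0 + r -> - zeta < Z < zeta -> v0 - s <= v <= v0 + s ->
  envelope t Z <= F v t Z.
Proof.
  intros Ht HZ Hv. destruct (G_root_spec t Z Ht HZ) as [Hw Gw].
  apply (min_at_critical_point (fun x => F x t Z) (fun x => - G x t Z) (v0 - s) (v0 + s));
    try lra.
  - intros x Hx. apply F_derive_v; assumption.
  - intros x y Hx Hxy Hy. pose proof (G_slope_v x y t Z Hx Hxy Hy Ht HZ). nra.
Qed.

Lemma envelope_slope_t Z t1 t2 :
  - zeta < Z < zeta -> t0 - r < t1 < t0 + r -> t0 - r < t2 < t0 + r -> t1 <= t2 ->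
  m * (t2 - t1) <= envelope t2 Z - envelope t1 Z <= M * (t2 - t1).
Proof.
  intros HZ.
  apply (envelope_slope_bounds (fun v t => F v t Z) (fun v => v0 - s <= v <= v0 + s)
           (fun t => t0 - r < t < t0 + r) (fun t => G_root t Z)).
  - intros t Ht. destruct (G_root_spec t Z Ht HZ) as [Hw _].
    split; [lra | intros v Hv; apply envelope_le; assumption].
  - intros v p1 p2 Hv H1 H2 H12. apply F_slope_t; assumption.
Qed.

Lemma envelope_slope_Z t Z1 Z2 :
  t0 - r < t < t0 + r -> - zeta < Z1 < zeta -> - zeta < Z2 < zeta -> Z1 <= Z2 ->
  - N * (Z2 - Z1) <= envelope t Z2 - envelope t Z1 <= - n * (Z2 - Z1).
Proof.
  intros Ht.
  apply (envelope_slope_bounds (fun v Z => F v t Z) (fun v => v0 - s <= v <= v0 + s)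
           (fun Z => - zeta < Z < zeta) (fun Z => G_root t Z)).
  - intros Z HZ. destruct (G_root_spec t Z Ht HZ) as [Hw _].
    split; [lra | intros v Hv; apply envelope_le; assumption].
  - intros v p1 p2 Hv H1 H2 H12. apply F_slope_Z; assumption.
Qed.

Lemma envelope_base : envelope t0 0 = 0.
Proof.
  assert (Ht0 : t0 - r < t0 < t0 + r) by lra.
  assert (HZ0 : - zeta < 0 < zeta) by lra.
  destruct (G_root_spec t0 0 Ht0 HZ0) as [Hw Gw].
  unfold envelope. rewrite (G_root_unique t0 0 (G_root t0 0) v0); try lra; assumption.
Qed.

Lemma envelope_continuous_t Z t :
  - zeta < Z < zeta -> t0 - r < t < t0 + r -> continuity_pt (fun t => envelope t Z) t.
Proof.
  intros HZ Ht. apply (continuity_pt_of_lipschitz _ (t0 - r) (t0 + r) M); [ | exact Ht].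
  intros y Hy. destruct (Rle_dec t y).
  - pose proof (envelope_slope_t Z t y HZ Ht Hy ltac:(lra)).
    assert (0 <= m * (y - t)) by (apply Rmult_le_pos; lra).
    rewrite Rabs_pos_eq, (Rabs_pos_eq (y - t)); lra.
  - pose proof (envelope_slope_t Z y t HZ Hy Ht ltac:(lra)).
    assert (0 <= m * (t - y)) by (apply Rmult_le_pos; lra).
    rewrite Rabs_left1, (Rabs_left1 (y - t)); lra.
Qed.

Lemma envelope_zeros_increasing Z1 Z2 t1 t2 :
  - zeta < Z1 < zeta -> - zeta < Z2 < zeta ->
  t0 - r < t1 < t0 + r -> t0 - r < t2 < t0 + r ->
  envelope t1 Z1 = 0 -> envelope t2 Z2 = 0 -> Z1 < Z2 -> t1 < t2.
Proof.
  intros HZ1 HZ2 Ht1 Ht2 E1 E2 HZ.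
  pose proof (envelope_slope_Z t1 Z1 Z2 Ht1 HZ1 HZ2 ltac:(lra)).
  destruct (Rlt_le_dec t1 t2) as [ | Hle]; [assumption | ].
  pose proof (envelope_slope_t Z2 t2 t1 HZ2 Ht2 Ht1 Hle).
  assert (0 < n * (Z2 - Z1)) by (apply Rmult_lt_0_compat; lra).
  assert (0 <= m * (t1 - t2)) by (apply Rmult_le_pos; lra).
  lra.
Qed.

Lemma envelope_zero_unique Z t1 t2 :
  - zeta < Z < zeta -> t0 - r < t1 < t0 + r -> t0 - r < t2 < t0 + r ->
  envelope t1 Z = 0 -> envelope t2 Z = 0 -> t1 = t2.
Proof.
  intros HZ Ht1 Ht2 E1 E2. destruct (Rle_dec t1 t2).
  - pose proof (envelope_slope_t Z t1 t2 HZ Ht1 Ht2 ltac:(lra)). nra.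
  - pose proof (envelope_slope_t Z t2 t1 HZ Ht2 Ht1 ltac:(lra)). nra.
Qed.

Lemma envelope_near_Z0 t Z :
  t0 - r < t < t0 + r -> - zeta < Z < zeta ->
  envelope t 0 - N * Rabs Z <= envelope t Z <= envelope t 0 + N * Rabs Z.
Proof.
  intros Ht HZ. assert (HZ0 : - zeta < 0 < zeta) by lra.
  destruct (Rle_dec 0 Z).
  - pose proof (envelope_slope_Z t 0 Z Ht HZ0 HZ ltac:(lra)).
    rewrite Rabs_pos_eq by lra. nra.
  - pose proof (envelope_slope_Z t Z 0 Ht HZ HZ0 ltac:(lra)).
    rewrite Rabs_left by lra. nra.
Qed.

Lemma zero_pair_unique Z T v t :
  - zeta < Z < zeta -> t0 - r < T < t0 + r -> envelope T Z = 0 ->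
  v0 - s <= v <= v0 + s -> t0 - r < t < t0 + r -> G v t Z = 0 -> F v t Z = 0 ->
  v = G_root T Z /\ t = T.
Proof.
  intros HZ HT ET Hv Ht Gv Fv.
  destruct (G_root_spec t Z Ht HZ) as [Hw Gw].
  assert (Ev : v = G_root t Z) by (apply (G_root_unique t Z); try assumption; lra).
  assert (Et : t = T).
  { apply (envelope_zero_unique Z); try assumption. unfold envelope. rewrite <- Ev. exact Fv. }
  split; [rewrite Ev, Et; reflexivity | exact Et].
Qed.

Lemma envelope_zero_exists tau :
  0 < tau < r ->
  exists delta (Th : R -> R), 0 < delta <= zeta /\
    forall Z, - delta < Z < delta -> t0 - tau < Th Z < t0 + tau /\ envelope (Th Z) Z = 0.
Proof.
  intros Htau.
  assert (N_gt0 : 0 < N) by lra.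
  destruct (Rmin_pos_bounds zeta (m * tau / N)) as (delta_gt0 & delta_le & delta_small);
    [lra | apply Rdiv_lt_0_compat; nra | ].
  set (delta := Rmin zeta (m * tau / N)) in *.
  assert (Hroot : forall Z, - delta < Z < delta ->
            exists t, t0 - tau < t < t0 + tau /\ envelope t Z = 0).
  { intros Z HZ.
    assert (HZ' : - zeta < Z < zeta) by lra.
    assert (HZ0 : - zeta < 0 < zeta) by lra.
    assert (Hsmall : N * Rabs Z < m * tau).
    { replace (m * tau) with (N * (m * tau / N)) by (field; lra).
      apply Rmult_lt_compat_l; [lra | apply Rabs_lt_between; lra]. }
    pose proof (envelope_slope_t 0 t0 (t0 + tau) HZ0 ltac:(lra) ltac:(lra) ltac:(lra)).
    pose proof (envelope_slope_t 0 (t0 - tau) t0 HZ0 ltac:(lra) ltac:(lra) ltac:(lra)).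
    pose proof (envelope_near_Z0 (t0 + tau) Z ltac:(lra) HZ').
    pose proof (envelope_near_Z0 (t0 - tau) Z ltac:(lra) HZ').
    rewrite envelope_base in *.
    apply (root_of_sign_change (fun t => envelope t Z)); try lra.
    intros x Hx. apply envelope_continuous_t; lra. }
  exists delta,
    (fun Z => epsilon (inhabits 0) (fun t => t0 - tau < t < t0 + tau /\ envelope t Z = 0)).
  split; [lra | ]. intros Z HZ. apply epsilon_spec, Hroot, HZ.
Qed.

Theorem envelope_zero_curve :
  exists delta eps (V Th : R -> R), 0 < delta /\ 0 < eps /\ eps <= s /\
    (forall Z, Rabs Z < delta ->
       Rabs (V Z - v0) < eps /\ Rabs (Th Z - t0) < eps /\
       G (V Z) (Th Z) Z = 0 /\ F (V Z) (Th Z) Z = 0 /\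
       (forall v t, Rabs (v - v0) < eps -> Rabs (t - t0) < eps ->
          G v t Z = 0 -> F v t Z = 0 -> v = V Z /\ t = Th Z)) /\
    (forall Z1 Z2, Rabs Z1 < delta -> Rabs Z2 < delta -> Z1 < Z2 -> Th Z1 < Th Z2).
Proof.
  destruct (Rmin_pos_bounds s r s_gt0 r_gt0) as (eps_gt0 & eps_le_s & eps_le_r).
  set (eps := Rmin s r) in *.
  destruct (continuity_2d_pt_ball _ t0 0 (k * eps) G_continuous_base) as (d & d_gt0 & HGd);
    [nra | ].
  rewrite G_base in HGd.
  (* The th-window stays where |G v0| < k eps, so that the v-root stays eps-close
     to v0 by G_root_close. *)
  destruct (Rmin_pos_bounds eps d eps_gt0 d_gt0) as (tau2_gt0 & tau2_le_eps & tau2_le_d).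
  destruct (envelope_zero_exists (Rmin eps d / 2) ltac:(lra))
    as (delta & Th & [delta_gt0 delta_le] & HTh).
  destruct (Rmin_pos_bounds delta d delta_gt0 d_gt0) as (delta'_gt0 & delta'_le & delta'_le_d).
  assert (Hwin : forall Z, Rabs Z < Rmin delta d ->
                 - delta < Z < delta /\ - zeta < Z < zeta /\ - d < Z < d)
    by (intros Z HZ; apply Rabs_lt_between in HZ; lra).
  exists (Rmin delta d), eps, (fun Z => G_root (Th Z) Z), Th.
  split; [exact delta'_gt0 | split; [exact eps_gt0 | split; [exact eps_le_s | split]]].
  - intros Z HZabs. destruct (Hwin Z HZabs) as (HZd & HZ & HZ'). destruct (HTh Z HZd) as [HT ET].
    assert (HTr : t0 - r < Th Z < t0 + r) by lra.
    destruct (G_root_spec (Th Z) Z HTr HZ) as [_ Gw].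
    pose proof (HGd (Th Z) Z ltac:(lra) ltac:(lra)).
    pose proof (G_root_close (Th Z) Z eps HTr HZ ltac:(lra)).
    split; [apply Rabs_lt_between'; lra | split; [apply Rabs_lt_between'; lra | ]].
    split; [exact Gw | split; [exact ET | ]].
    intros v t Hv Ht. apply Rabs_lt_between' in Hv, Ht.
    apply zero_pair_unique; (assumption || lra).
  - intros Z1 Z2 H1 H2 H12.
    destruct (Hwin Z1 H1) as (H1d & H1' & _), (Hwin Z2 H2) as (H2d & H2' & _).
    destruct (HTh Z1 H1d), (HTh Z2 H2d).
    apply (envelope_zeros_increasing Z1 Z2); (assumption || lra).
Qed.

End Envelope.

(** * The interface equations *)

Definition f1_cleared (psil psig : R -> R -> R) (vl v t Z : R) : R :=
  (v - vl) * pres psil vl t - Z * (v - vl) ^ 2 - psil vl t + psig v t.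

Definition f2_sub_f1 (psil psig : R -> R -> R) (vl v t Z : R) : R :=
  pres psig v t - pres psil vl t + 2 * Z * (v - vl).

Definition f1_cleared_dth (psil psig : R -> R -> R) (vl v t : R) : R :=
  (v - vl) * dth (pres psil) vl t - dth psil vl t + dth psig v t.

Lemma f1_f2_zero_iff (psil psig : R -> R -> R) (vl v t Z : R) :
  v <> vl ->
  (f1 psil psig vl t v Z = 0 /\ f2 psil psig vl t v Z = 0) <->
  (f2_sub_f1 psil psig vl v t Z = 0 /\ f1_cleared psil psig vl v t Z = 0).
Proof.
  intros Hv.
  assert (Hinv : / (v - vl) <> 0) by (apply Rinv_neq_0_compat; lra).
  assert (E1 : f1 psil psig vl t v Z = / (v - vl) * f1_cleared psil psig vl v t Z)
    by (unfold f1, f1_cleared; field; lra).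
  assert (E2 : f2 psil psig vl t v Z = f1 psil psig vl t v Z + f2_sub_f1 psil psig vl v t Z)
    by (unfold f1, f2, f2_sub_f1; ring).
  rewrite E2, E1. split; intros [H1 H2].
  - split; [lra | ]. apply (Rmult_eq_reg_l (/ (v - vl))); [lra | exact Hinv].
  - rewrite H2. lra.
Qed.

Section Regularity.

Variables (alpha : R) (psi : R -> R -> R).
Hypothesis psi_C2 : C2_on (dom alpha) psi.

Lemma C2_ex_derive_v v t : dom alpha v t -> ex_derive (fun x => psi x t) v.
Proof. intros Hd. now destruct (proj1 psi_C2 v t Hd). Qed.

Lemma C2_ex_derive_th v t : dom alpha v t -> ex_derive (fun s => psi v s) t.
Proof. intros Hd. now destruct (proj1 psi_C2 v t Hd) as (_ & H & _). Qed.

Lemma C2_ex_derive_pres_v v t : dom alpha v t -> ex_derive (fun x => pres psi x t) v.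
Proof.
  intros Hd. destruct (proj1 (proj2 psi_C2) v t Hd) as [H _].
  apply (ex_derive_opp (fun x => dv psi x t)), H.
Qed.

Lemma C2_ex_derive_pres_th v t : dom alpha v t -> ex_derive (fun s => pres psi v s) t.
Proof.
  intros Hd. destruct (proj1 (proj2 psi_C2) v t Hd) as (_ & H & _).
  apply (ex_derive_opp (fun s => dv psi v s)), H.
Qed.

Lemma continuity_dv_pres v t : dom alpha v t -> continuity_2d_pt (dv (pres psi)) v t.
Proof.
  intros Hd. destruct (proj1 (proj2 psi_C2) v t Hd) as (_ & _ & _ & H & _).
  apply continuity_2d_pt_ext with (fun a b => - dv (dv psi) a b).
  - intros a b. unfold pres. symmetry. unfold dv at 1. rewrite Derive_opp. reflexivity.
  - apply continuity_2d_pt_opp, cont2_continuity_2d_pt, H.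
Qed.

Lemma maxwell_relation v t : dom alpha v t -> dth (pres psi) v t = dv (entr psi) v t.
Proof.
  intros Hd.
  assert (E1 : dth (pres psi) v t = - dth (dv psi) v t)
    by (unfold dth at 1, pres; apply (Derive_opp (fun s => dv psi v s))).
  assert (E2 : dv (entr psi) v t = - dv (dth psi) v t)
    by (unfold dv at 1, entr; apply (Derive_opp (fun x => dth psi x t))).
  rewrite E1, E2. f_equal. symmetry.
  destruct psi_C2 as (H0 & H1 & H2). destruct Hd as [Hv Ht].
  assert (Hnear : 0 < Rmin (v - alpha) t) by (apply Rmin_glb_lt; lra).
  apply (Schwarz psi v t).
  - exists (mkposreal _ Hnear). intros a b Ha Hb. simpl in Ha, Hb.
    pose proof (Rmin_l (v - alpha) t). pose proof (Rmin_r (v - alpha) t).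
    assert (Hab : dom alpha a b)
      by (apply Rabs_lt_between' in Ha, Hb; split; lra).
    destruct (H0 a b Hab) as (E3 & E4 & _). destruct (H1 a b Hab) as (_ & E5 & _).
    destruct (H2 a b Hab) as (E6 & _). repeat split; assumption.
  - destruct (H2 v t (conj Hv Ht)) as (_ & _ & _ & C & _). apply cont2_continuity_2d_pt, C.
  - destruct (H1 v t (conj Hv Ht)) as (_ & _ & _ & _ & C). apply cont2_continuity_2d_pt, C.
Qed.

End Regularity.

Section Saturation.

Variables (alpha : R) (psil psig : R -> R -> R) (vl thb vgs : R).
Hypotheses (psil_C2 : C2_on (dom alpha) psil) (psig_C2 : C2_on (dom alpha) psig)
  (alpha_lt_vl : alpha < vl) (vl_lt_vgs : vl < vgs) (thb_gt0 : 0 < thb).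

Local Notation F := (f1_cleared psil psig vl).
Local Notation G := (f2_sub_f1 psil psig vl).

Lemma is_derive_f1_cleared_v v t Z :
  dom alpha v t -> is_derive (fun x => F x t Z) v (- G v t Z).
Proof.
  intros Hd. pose proof (C2_ex_derive_v alpha psig psig_C2 v t Hd).
  unfold f1_cleared. auto_derive; [assumption | ]. unfold f2_sub_f1, pres, dv. ring.
Qed.

Lemma is_derive_f2_sub_f1_v v t Z :
  dom alpha v t -> is_derive (fun x => G x t Z) v (dv (pres psig) v t + 2 * Z).
Proof.
  intros Hd. pose proof (C2_ex_derive_pres_v alpha psig psig_C2 v t Hd).
  unfold f2_sub_f1. auto_derive; [assumption | ]. unfold dv. ring.
Qed.

Lemma is_derive_f1_cleared_th v t Z :
  dom alpha v t -> is_derive (fun s => F v s Z) t (f1_cleared_dth psil psig vl v t).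
Proof.
  intros Hd. assert (Hl : dom alpha vl t) by (split; [lra | apply Hd]).
  pose proof (C2_ex_derive_pres_th alpha psil psil_C2 vl t Hl).
  pose proof (C2_ex_derive_th alpha psil psil_C2 vl t Hl).
  pose proof (C2_ex_derive_th alpha psig psig_C2 v t Hd).
  unfold f1_cleared. auto_derive; [tauto | ]. unfold f1_cleared_dth, dth. ring.
Qed.

Lemma continuity_f2_sub_f1_tZ v t Z :
  dom alpha v t -> continuity_2d_pt (fun s W => G v s W) t Z.
Proof.
  intros Hd. assert (Hl : dom alpha vl t) by (split; [lra | apply Hd]).
  unfold f2_sub_f1.
  apply continuity_2d_pt_plus; [apply continuity_2d_pt_minus | ].
  - apply (continuity_2d_pt_of_fst (fun s => pres psig v s)), ex_derive_continuity_pt.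
    apply (C2_ex_derive_pres_th alpha psig psig_C2 v t Hd).
  - apply (continuity_2d_pt_of_fst (fun s => pres psil vl s)), ex_derive_continuity_pt.
    apply (C2_ex_derive_pres_th alpha psil psil_C2 vl t Hl).
  - apply continuity_2d_pt_mult; [apply continuity_2d_pt_mult | ];
      auto using continuity_2d_pt_const, continuity_2d_pt_id2.
Qed.

Lemma continuity_f1_cleared_dth v t :
  dom alpha v t -> continuity_2d_pt (f1_cleared_dth psil psig vl) v t.
Proof.
  intros Hd. assert (Hl : dom alpha vl t) by (split; [lra | apply Hd]).
  destruct psil_C2 as (Hl0 & Hl1 & _), psig_C2 as (Hg0 & _).
  destruct (Hl1 vl t Hl) as (_ & _ & _ & _ & C1).
  destruct (Hl0 vl t Hl) as (_ & _ & _ & _ & C2).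
  destruct (Hg0 v t Hd) as (_ & _ & _ & _ & C3).
  apply continuity_2d_pt_ext with
    (fun a b => (a - vl) * (- dth (dv psil) vl b) - dth psil vl b + dth psig a b).
  - intros a b. unfold f1_cleared_dth, pres, dth. rewrite Derive_opp. reflexivity.
  - apply continuity_2d_pt_plus; [apply continuity_2d_pt_minus | ].
    + apply continuity_2d_pt_mult.
      * apply continuity_2d_pt_minus;
          [apply continuity_2d_pt_id1 | apply continuity_2d_pt_const].
      * apply continuity_2d_pt_opp, (continuity_2d_pt_fix_fst (dth (dv psil))).
        apply cont2_continuity_2d_pt, C1.
    + apply (continuity_2d_pt_fix_fst (dth psil)), cont2_continuity_2d_pt, C2.
    + apply cont2_continuity_2d_pt, C3.
Qed.

Hypotheses
  (sat_pres : pres psil vl thb = pres psig vgs thb)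
  (sat_chord : pres psig vgs thb = (psil vl thb - psig vgs thb) / (vgs - vl))
  (entropy_gap : dv (entr psil) vl thb > (entr psig vgs thb - entr psil vl thb) / (vgs - vl))
  (gas_stable : dv (pres psig) vgs thb < 0).

Lemma f2_sub_f1_base : G vgs thb 0 = 0.
Proof. unfold f2_sub_f1. rewrite sat_pres. ring. Qed.

Lemma f1_cleared_base : F vgs thb 0 = 0.
Proof. unfold f1_cleared. rewrite sat_pres, sat_chord. field. lra. Qed.

Lemma f1_cleared_dth_base_pos : 0 < f1_cleared_dth psil psig vl vgs thb.
Proof.
  unfold f1_cleared_dth.
  rewrite (maxwell_relation alpha psil psil_C2 vl thb) by (split; lra).
  pose proof entropy_gap as Hgap.
  set (E := dv (entr psil) vl thb) in Hgap |- *. unfold entr in Hgap.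
  apply (Rmult_lt_compat_l (vgs - vl)) in Hgap; [ | lra].
  replace ((vgs - vl) * ((- dth psig vgs thb - - dth psil vl thb) / (vgs - vl)))
    with (dth psil vl thb - dth psig vgs thb) in Hgap by (field; lra).
  lra.
Qed.

Lemma stability_box :
  exists rho k m M, 0 < rho /\ rho <= (vgs - vl) / 2 /\ rho <= thb / 2 /\ 0 < k /\ 0 < m /\
    forall v t, vgs - rho < v < vgs + rho -> thb - rho < t < thb + rho ->
      dv (pres psig) v t <= - 2 * k /\ m <= f1_cleared_dth psil psig vl v t <= M.
Proof.
  assert (Hd : dom alpha vgs thb) by (split; lra).
  pose proof f1_cleared_dth_base_pos as c_gt0.
  destruct (continuity_2d_pt_ball _ vgs thb (f1_cleared_dth psil psig vl vgs thb / 2)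
              (continuity_f1_cleared_dth vgs thb Hd)) as (d1 & d1_gt0 & H1); [lra | ].
  destruct (continuity_2d_pt_ball _ vgs thb (- dv (pres psig) vgs thb / 2)
              (continuity_dv_pres alpha psig psig_C2 vgs thb Hd)) as (d2 & d2_gt0 & H2); [lra | ].
  destruct (Rmin_pos_bounds d1 d2) as (d_gt0 & d_le1 & d_le2); [assumption | assumption | ].
  destruct (Rmin_pos_bounds ((vgs - vl) / 2) (thb / 2)) as (e_gt0 & e_le1 & e_le2); [lra | lra | ].
  destruct (Rmin_pos_bounds _ _ d_gt0 e_gt0) as (rho_gt0 & rho_le_d & rho_le_e).
  exists (Rmin (Rmin d1 d2) (Rmin ((vgs - vl) / 2) (thb / 2))),
    (- dv (pres psig) vgs thb / 4),
    (f1_cleared_dth psil psig vl vgs thb / 2), (3 * f1_cleared_dth psil psig vl vgs thb / 2).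
  split; [exact rho_gt0 | split; [lra | split; [lra | split; [lra | split; [lra | ]]]]].
  intros v t Hv Ht.
  specialize (H1 v t ltac:(lra) ltac:(lra)). specialize (H2 v t ltac:(lra) ltac:(lra)).
  lra.
Qed.

Section Box.

Variables (rho k m M : R).
Hypotheses (rho_gt0 : 0 < rho) (rho_le_gap : rho <= (vgs - vl) / 2) (rho_le_thb : rho <= thb / 2)
  (k_gt0 : 0 < k) (m_gt0 : 0 < m).
Hypothesis box_bounds : forall v t, vgs - rho < v < vgs + rho -> thb - rho < t < thb + rho ->
  dv (pres psig) v t <= - 2 * k /\ m <= f1_cleared_dth psil psig vl v t <= M.

Lemma box_dom v t : vgs - rho < v < vgs + rho -> thb - rho < t < thb + rho -> dom alpha v t.
Proof. intros; split; lra. Qed.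

Lemma f2_sub_f1_slope_v v1 v2 t Z :
  vgs - rho < v1 -> v1 <= v2 -> v2 < vgs + rho -> thb - rho < t < thb + rho ->
  - (k / 2) < Z < k / 2 -> k * (v2 - v1) <= G v1 t Z - G v2 t Z.
Proof.
  intros H1 H12 H2 Ht HZ.
  assert (G v2 t Z - G v1 t Z <= - k * (v2 - v1)); [ | lra].
  apply (derive_le_slope (fun x => G x t Z) (fun x => dv (pres psig) x t + 2 * Z));
    [exact H12 | | ].
  - intros x Hx. apply is_derive_f2_sub_f1_v, box_dom; lra.
  - intros x Hx. destruct (box_bounds x t ltac:(lra) Ht). lra.
Qed.

Lemma f1_cleared_slope_t v t1 t2 Z :
  vgs - rho < v < vgs + rho -> thb - rho < t1 -> t1 <= t2 -> t2 < thb + rho ->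
  m * (t2 - t1) <= F v t2 Z - F v t1 Z <= M * (t2 - t1).
Proof.
  intros Hv H1 H12 H2.
  assert (Hder : forall t, t1 <= t <= t2 ->
            is_derive (fun s => F v s Z) t (f1_cleared_dth psil psig vl v t))
    by (intros; apply is_derive_f1_cleared_th, box_dom; lra).
  split; [apply derive_ge_slope with (1 := H12) (2 := Hder)
         | apply derive_le_slope with (1 := H12) (2 := Hder)];
    intros t Ht; destruct (box_bounds v t Hv ltac:(lra)); lra.
Qed.

Lemma f1_cleared_slope_Z v t Z1 Z2 :
  vgs - rho < v < vgs + rho -> Z1 <= Z2 ->
  - (2 * (vgs - vl)) ^ 2 * (Z2 - Z1) <= F v t Z2 - F v t Z1 <= - ((vgs - vl) / 2) ^ 2 * (Z2 - Z1).
Proof.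
  intros Hv HZ.
  replace (F v t Z2 - F v t Z1) with (- (v - vl) ^ 2 * (Z2 - Z1)) by (unfold f1_cleared; ring).
  split; apply Rmult_le_compat_r; nra.
Qed.

Lemma f2_sub_f1_ends :
  exists r zeta, 0 < r <= rho /\ 0 < zeta <= k / 2 /\
    forall t Z, thb - r < t < thb + r -> - zeta < Z < zeta ->
      G (vgs + rho / 2) t Z < 0 < G (vgs - rho / 2) t Z.
Proof.
  assert (Ht0 : thb - rho < thb < thb + rho) by lra.
  assert (HZ0 : - (k / 2) < 0 < k / 2) by lra.
  pose proof (f2_sub_f1_slope_v (vgs - rho / 2) vgs thb 0 ltac:(lra) ltac:(lra) ltac:(lra) Ht0 HZ0).
  pose proof (f2_sub_f1_slope_v vgs (vgs + rho / 2) thb 0 ltac:(lra) ltac:(lra) ltac:(lra) Ht0 HZ0).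
  rewrite f2_sub_f1_base in *.
  assert (Hm : dom alpha (vgs - rho / 2) thb) by (apply box_dom; lra).
  assert (Hp : dom alpha (vgs + rho / 2) thb) by (apply box_dom; lra).
  destruct (continuity_2d_pt_ball _ thb 0 (k * (rho / 2))
              (continuity_f2_sub_f1_tZ _ thb 0 Hm)) as (d1 & d1_gt0 & H1); [nra | ].
  destruct (continuity_2d_pt_ball _ thb 0 (k * (rho / 2))
              (continuity_f2_sub_f1_tZ _ thb 0 Hp)) as (d2 & d2_gt0 & H2); [nra | ].
  destruct (Rmin_pos_bounds d1 d2) as (d_gt0 & d_le1 & d_le2); [assumption | assumption | ].
  destruct (Rmin_pos_bounds _ _ rho_gt0 d_gt0) as (r_gt0 & r_le & r_le_d).
  destruct (Rmin_pos_bounds (k / 2) _ ltac:(lra) d_gt0) as (z_gt0 & z_le & z_le_d).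
  exists (Rmin rho (Rmin d1 d2)), (Rmin (k / 2) (Rmin d1 d2)).
  split; [lra | split; [lra | ]].
  intros t Z Ht HZ.
  specialize (H1 t Z ltac:(lra) ltac:(lra)). specialize (H2 t Z ltac:(lra) ltac:(lra)).
  lra.
Qed.

Lemma interface_solution_curve :
  exists delta eps (V Th : R -> R), 0 < delta /\ 0 < eps /\
    (forall Z, Rabs Z < delta ->
       Rabs (V Z - vgs) < eps /\ Rabs (Th Z - thb) < eps /\
       alpha < V Z /\ 0 < Th Z /\ V Z <> vl /\
       f1 psil psig vl (Th Z) (V Z) Z = 0 /\ f2 psil psig vl (Th Z) (V Z) Z = 0 /\
       (forall v th, Rabs (v - vgs) < eps -> Rabs (th - thb) < eps ->
          alpha < v -> 0 < th -> v <> vl ->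
          f1 psil psig vl th v Z = 0 -> f2 psil psig vl th v Z = 0 ->
          v = V Z /\ th = Th Z)) /\
    (forall Z1 Z2, Rabs Z1 < delta -> Rabs Z2 < delta -> Z1 < Z2 -> Th Z1 < Th Z2).
Proof.
  destruct f2_sub_f1_ends as (r & zeta & [r_gt0 r_le] & [zeta_gt0 zeta_le] & ends).
  destruct (envelope_zero_curve F G vgs thb (rho / 2) r zeta k m M
              (((vgs - vl) / 2) ^ 2) ((2 * (vgs - vl)) ^ 2)
              ltac:(lra) r_gt0 zeta_gt0 k_gt0 m_gt0 ltac:(nra) ltac:(nra))
    as (delta & eps & V & Th & delta_gt0 & eps_gt0 & eps_le & Hcurve & Hmono).
  - intros v t Z Hv Ht HZ. apply is_derive_f1_cleared_v, box_dom; lra.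
  - intros v t Z Hv Ht HZ. apply ex_derive_continuity_pt.
    eexists. apply is_derive_f2_sub_f1_v, box_dom; lra.
  - intros v1 v2 t Z H1 H12 H2 Ht HZ. apply f2_sub_f1_slope_v; lra.
  - exact ends.
  - apply continuity_f2_sub_f1_tZ. split; lra.
  - intros v t1 t2 Z Hv H1 H2 H12 HZ. apply f1_cleared_slope_t; lra.
  - intros v t Z1 Z2 Hv Ht H1 H2 H12. apply f1_cleared_slope_Z; lra.
  - exact f1_cleared_base.
  - exact f2_sub_f1_base.
  - exists delta, eps, V, Th.
    split; [exact delta_gt0 | split; [exact eps_gt0 | split; [ | exact Hmono]]].
    intros Z HZ. destruct (Hcurve Z HZ) as (HV & HT & GV & FV & Huniq).
    pose proof (proj1 (Rabs_lt_between' _ _ _) HV) as HV'.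
    pose proof (proj1 (Rabs_lt_between' _ _ _) HT) as HT'.
    assert (HVne : V Z <> vl) by lra.
    destruct (proj2 (f1_f2_zero_iff psil psig vl (V Z) (Th Z) Z HVne) (conj GV FV)) as [E1 E2].
    split; [exact HV | split; [exact HT | split; [lra | split; [lra | ]]]].
    split; [exact HVne | split; [exact E1 | split; [exact E2 | ]]].
    intros v th Hv Hth _ _ Hne E1' E2'.
    destruct (proj1 (f1_f2_zero_iff psil psig vl v th Z Hne) (conj E1' E2')) as [Gv Fv].
    exact (Huniq v th Hv Hth Gv Fv).
Qed.

End Box.

End Saturation.

Theorem theorem3p2 (alpha : R) (psil psig : R -> R -> R) (rho_l thb vgs : R) :
  0 < alpha ->
  C2_on (dom alpha) psil -> C2_on (dom alpha) psig ->
  0 < rho_l -> 0 < thb ->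
  alpha < / rho_l -> / rho_l < vgs ->
  pres psil (/ rho_l) thb = pres psig vgs thb ->
  pres psig vgs thb = (psil (/ rho_l) thb - psig vgs thb) / (vgs - / rho_l) ->
  dv (entr psil) (/ rho_l) thb >
    (entr psig vgs thb - entr psil (/ rho_l) thb) / (vgs - / rho_l) ->
  dv (pres psig) vgs thb < 0 ->
  exists (delta eps : R) (V Th : R -> R),
    0 < delta /\ 0 < eps /\
    (forall Z, Rabs Z < delta ->
       Rabs (V Z - vgs) < eps /\ Rabs (Th Z - thb) < eps /\
       alpha < V Z /\ 0 < Th Z /\ V Z <> / rho_l /\
       f1 psil psig (/ rho_l) (Th Z) (V Z) Z = 0 /\
       f2 psil psig (/ rho_l) (Th Z) (V Z) Z = 0 /\
       (forall v th, Rabs (v - vgs) < eps -> Rabs (th - thb) < eps ->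
          alpha < v -> 0 < th -> v <> / rho_l ->
          f1 psil psig (/ rho_l) th v Z = 0 ->
          f2 psil psig (/ rho_l) th v Z = 0 ->
          v = V Z /\ th = Th Z)) /\
    (forall Z1 Z2, Rabs Z1 < delta -> Rabs Z2 < delta -> Z1 < Z2 -> Th Z1 < Th Z2).
Proof.
  intros _ HL HG _ Hthb Hal Hlg Hpres Hchord Hent Hstab.
  destruct (stability_box alpha psil psig (/ rho_l) thb vgs HL HG Hal Hlg Hthb Hent Hstab)
    as (rho & k & m & M & rho_gt0 & rho_le_gap & rho_le_thb & k_gt0 & m_gt0 & box).
  exact (interface_solution_curve alpha psil psig (/ rho_l) thb vgs HL HG Hal Hlg Hthb
           Hpres Hchord rho k m M rho_gt0 rho_le_gap rho_le_thb k_gt0 m_gt0 box).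
Qed.
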